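(* Let $G$ be a strategic game with players $1,\dots,n$. The $\mathcal{L}_\nu$-formula $$(\mathit{rat}_{gbr}\wedge\Box^*\mathit{rat}_{gbr})\rightarrow\nu X.\,O_{lsd}X$$ is a theorem of the proof system $\mathbf{R}$, where $gbr=(gbr_1,\dots,gbr_n)$ and $lsd=(lsd_1,\dots,lsd_n)$.
   Context: Strategic game $G=(T_1,\dots,T_n,<_1,\dots,<_n)$: arbitrary nonempty strategy sets $T_i$, $<_i$ a total linear order on $T=\prod_iT_i$, $\ge_i$ its reflexive closure; restriction $S=(S_1,\dots,S_n)$, $S_i\subseteq T_i$. $\mathcal{L}_O$: first-order formulas from atoms $C(a)$, $a\ge^i_cb$ ($a,b,c$ variables or constant $o$) with $\neg,\wedge,\exists$; abbreviations $\exists x\in C\,\phi:=\exists x(C(x)\wedge\phi)$, $\forall x\in C\,\phi:=\forall x(C(x)\to\phi)$. In an optimality model $(G,G',s)$ with assignment $\alpha$ ($o\mapsto s$): $C(x)$ iff $\alpha(x)_j\in G'_j$ for all $j$; $x\ge^i_zy$ iff $(\alpha(x)_i,\alpha(z)_{-i})\ge_i(\alpha(y)_i,\alpha(z)_{-i})$. Optimality condition for $i$: closed formula using only $\ge^i$; positive if every $C(\cdot)$ is under an even number of negations. Specific conditions: $gbr_i:=\exists z\in C\,\forall y\;o\ge^i_zy$ (global best response) and $lsd_i:=\forall y\in C\,\exists z\in C\;o\ge^i_zy$ (not locally strictly dominated). Belief model, $G_E$, and $\mathcal{L}_\nu$ with its semantics: $(\Omega,\bar s_1,\dots,\bar s_n,P_1,\dots,P_n)$;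 $(G_E)_i=\{\bar s_i(u):u\in E\}$; $\psi::=\mathit{rat}_{\phi_i}\mid X\mid\psi\wedge\psi\mid\neg\psi\mid\Box_i\psi\mid O_{\phi_i}\psi\mid\nu X.\psi$ ($\nu$-free body); $[\![\mathit{rat}_{\phi_i}]\!]_E=\{\omega:(G,G_{P_i(\omega)},\bar s(\omega))\models\phi_i\}$, $[\![X]\!]_E=E$, $[\![\Box_i\psi]\!]_E=\{\omega:P_i(\omega)\subseteq[\![\psi]\!]_E\}$, $[\![O_{\phi_i}\psi]\!]_E=\{\omega:(G,G_{[\![\psi]\!]_E},\bar s(\omega))\models\phi_i\}$, $[\![\nu X.\psi]\!]_E$ the transfinite-iteration outcome (starting from $\Omega$, intersections at limits) of $F\mapsto[\![\psi]\!]_F\cap F$. Abbreviations $\mathit{rat}_\phi,\Box\psi,O_\phi\psi$ as conjunctions over players and $\Box^*\psi:=\nu X.\Box(X\wedge\psi)$. Positive in $X$: each $X$ under an even number of negations and inside $O_{\phi_i}$ only for positive $\phi_i$. Proof system $\mathbf{P}$: propositional reasoning plus, for positive optimality conditions and $\psi$ positive in $X$: $\mathit{rat}_\phi\to(\Box\chi\to O_\phi\chi)$; $\nu X.\psi\to\psi[X\mapsto\nu X.\psi]$; from $\chi\to\psi[X\mapsto\chi]$ infer $\chi\to\nu X.\psi$. Proof system $\mathbf{R}$: $\mathbf{P}$ plus a standard first-order proof system for $\mathcal{L}_O$-formulas, plus the rules (Incl) from $\chi\to\psi$ infer $\nu X.\chi\to\nu X.\psi$, where $\chi$ is positive in $X$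 and $\psi$ is any $\nu$-free formula; and (Link) from $\phi_i\to\psi_i$ for all $i\in[1..n]$ (as $\mathcal{L}_O$-formulas) infer $O_\phi X\to O_\psi X$. *)

(* Syntax of L_O and L_nu, the first-order proof system and
   the proof system R, following the paper. Players are numbered 0..n-1. *)
From Stdlib Require Import Arith Lia.

Definition player (n : nat) := { i : nat | i < n }.

Record StrategicGame (n : nat) := {
  strat : player n -> Type;
  strat_nonempty : forall i, inhabited (strat i);
  (* pref i x y  means  x <_i y  on profiles T = prod_i T_i *)
  pref : player n -> (forall j, strat j) -> (forall j, strat j) -> Prop;
  pref_irrefl : forall i x, ~ pref i x x;
  pref_trans : forall i x y z, pref i x y -> pref i y z -> pref i x z;
  pref_total : forall i x y, pref i x y \/ x = y \/ pref i y x
}.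

Inductive term := TV (k : nat) | TO.

Inductive oform :=
| OC (t : term)
| OGe (i : nat) (a b c : term)         (* a >=^i_c b *)
| ONot (p : oform)
| OAnd (p q : oform)
| OEx (p : oform).                     (* binds de Bruijn index 0 *)

Definition OImp (p q : oform) := ONot (OAnd p (ONot q)).
Definition OAll (p : oform) := ONot (OEx (ONot p)).

Definition lift_t (k : nat) (t : term) : term :=
  match t with TV m => if k <=? m then TV (S m) else TV m | TO => TO end.
Fixpoint olift (k : nat) (p : oform) : oform :=
  match p with
  | OC t => OC (lift_t k t)
  | OGe i a b c => OGe i (lift_t k a) (lift_t k b) (lift_t k c)
  | ONot p => ONot (olift k p)
  | OAnd p q => OAnd (olift k p) (olift k q)
  | OEx p => OEx (olift (S k) p)
  end.

Definition subst_t (k : nat) (s t : term) : term :=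
  match t with
  | TV m => if m =? k then s else if k <? m then TV (pred m) else TV m
  | TO => TO
  end.
Fixpoint osubst (k : nat) (s : term) (p : oform) : oform :=
  match p with
  | OC t => OC (subst_t k s t)
  | OGe i a b c => OGe i (subst_t k s a) (subst_t k s b) (subst_t k s c)
  | ONot p => ONot (osubst k s p)
  | OAnd p q => OAnd (osubst k s p) (osubst k s q)
  | OEx p => OEx (osubst (S k) (lift_t 0 s) p)
  end.

Definition tclosed (k : nat) (t : term) : Prop :=
  match t with TV m => m < k | TO => True end.
Fixpoint oclosed (k : nat) (p : oform) : Prop :=
  match p with
  | OC t => tclosed k t
  | OGe _ a b c => tclosed k a /\ tclosed k b /\ tclosed k c
  | ONot p => oclosed k p
  | OAnd p q => oclosed k p /\ oclosed k q
  | OEx p => oclosed (S k) p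
  end.

Fixpoint wfO (n : nat) (p : oform) : Prop :=
  match p with
  | OC _ => True
  | OGe i _ _ _ => i < n
  | ONot p => wfO n p
  | OAnd p q => wfO n p /\ wfO n q
  | OEx p => wfO n p
  end.

Fixpoint onlyGe (i : nat) (p : oform) : Prop :=
  match p with
  | OC _ => True
  | OGe j _ _ _ => j = i
  | ONot p => onlyGe i p
  | OAnd p q => onlyGe i p /\ onlyGe i q
  | OEx p => onlyGe i p
  end.

Definition optcond (n i : nat) (p : oform) : Prop :=
  i < n /\ oclosed 0 p /\ onlyGe i p.

(* every C(.) under an even number of negations (b = true: even so far) *)
Fixpoint posC (b : bool) (p : oform) : Prop :=
  match p with
  | OC _ => b = true
  | OGe _ _ _ _ => True
  | ONot p => posC (negb b) p
  | OAnd p q => posC b p /\ posC b q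
  | OEx p => posC b p
  end.
Definition posO (p : oform) : Prop := posC true p.

(* propositional tautology instances (atoms and OEx are propositional atoms) *)
Fixpoint oeval (v : oform -> bool) (p : oform) : bool :=
  match p with
  | ONot p => negb (oeval v p)
  | OAnd p q => oeval v p && oeval v q
  | _ => v p
  end.
Definition otaut (p : oform) : Prop := forall v, oeval v p = true.

(* Standard (Shoenfield-style) Hilbert system for first-order logic
   without equality in the language {not, and, exists}. *)
Inductive FOprov (n : nat) : oform -> Prop :=
| fo_taut p : wfO n p -> otaut p -> FOprov n p
| fo_mp p q : FOprov n (OImp p q) -> FOprov n p -> FOprov n q
| fo_exI p t : wfO n (OEx p) -> FOprov n (OImp (osubst 0 t p) (OEx p))
| fo_exE p q : FOprov n (OImp p (olift 0 q)) -> FOprov n (OImp (OEx p) q).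

(* gbr_i := exists z in C, forall y, o >=^i_z y *)
Definition gbr (i : nat) : oform :=
  OEx (OAnd (OC (TV 0)) (OAll (OGe i TO (TV 0) (TV 1)))).
(* lsd_i := forall y in C, exists z in C, o >=^i_z y *)
Definition lsd (i : nat) : oform :=
  OAll (OImp (OC (TV 0)) (OEx (OAnd (OC (TV 0)) (OGe i TO (TV 1) (TV 0))))).

Inductive nform :=
| NRat (i : nat) (p : oform)
| NVar
| NAnd (a b : nform)
| NNot (a : nform)
| NBox (i : nat) (a : nform)
| NOpt (i : nat) (p : oform) (a : nform)
| NNu (a : nform).

Definition NImp (a b : nform) := NNot (NAnd a (NNot b)).

Fixpoint nufree (a : nform) : Prop :=
  match a with
  | NRat _ _ | NVar => True
  | NAnd a b => nufree a /\ nufree b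
  | NNot a | NBox _ a | NOpt _ _ a => nufree a
  | NNu _ => False
  end.

Fixpoint wfN (n : nat) (a : nform) : Prop :=
  match a with
  | NRat i p => optcond n i p
  | NVar => True
  | NAnd a b => wfN n a /\ wfN n b
  | NNot a => wfN n a
  | NBox i a => i < n /\ wfN n a
  | NOpt i p a => optcond n i p /\ wfN n a
  | NNu a => nufree a /\ wfN n a
  end.

(* a[X |-> c] (X is bound under NNu) *)
Fixpoint nsubst (c a : nform) : nform :=
  match a with
  | NRat i p => NRat i p
  | NVar => c
  | NAnd a b => NAnd (nsubst c a) (nsubst c b)
  | NNot a => NNot (nsubst c a)
  | NBox i a => NBox i (nsubst c a)
  | NOpt i p a => NOpt i p (nsubst c a)
  | NNu a => NNu a
  end.

Fixpoint occX (a : nform) : bool :=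
  match a with
  | NRat _ _ => false
  | NVar => true
  | NAnd a b => occX a || occX b
  | NNot a | NBox _ a | NOpt _ _ a => occX a
  | NNu _ => false
  end.

Fixpoint posX (b : bool) (a : nform) : Prop :=
  match a with
  | NRat _ _ => True
  | NVar => b = true
  | NAnd a c => posX b a /\ posX b c
  | NNot a => posX (negb b) a
  | NBox _ a => posX b a
  | NOpt _ p a => (occX a = true -> posO p) /\ posX b a
  | NNu _ => True
  end.

(* big conjunction f 0 /\ ... /\ f (n-1)  (meaningful for n >= 1) *)
Fixpoint bigAnd (f : nat -> nform) (n : nat) : nform :=
  match n with
  | 0 => f 0
  | S m => match m with 0 => f 0 | _ => NAnd (bigAnd f m) (f m) end
  end.

Definition ratv (n : nat) (phi : nat -> oform) := bigAnd (fun i => NRat i (phi i)) n.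
Definition boxv (n : nat) (a : nform) := bigAnd (fun i => NBox i a) n.
Definition Ov (n : nat) (phi : nat -> oform) (a : nform) :=
  bigAnd (fun i => NOpt i (phi i) a) n.
Definition boxstar (n : nat) (a : nform) := NNu (boxv n (NAnd NVar a)).

Fixpoint neval (v : nform -> bool) (a : nform) : bool :=
  match a with
  | NNot a => negb (neval v a)
  | NAnd a b => neval v a && neval v b
  | _ => v a
  end.
Definition ntaut (a : nform) : Prop := forall v, neval v a = true.

(* The proof system R (= P plus first-order logic, Incl and Link). *)
Inductive Rprov (n : nat) : nform -> Prop :=
| r_taut a : wfN n a -> ntaut a -> Rprov n a
| r_mp a b : Rprov n (NImp a b) -> Rprov n a -> Rprov n b
| r_ratbox (phi : nat -> oform) (c : nform) :
    (forall i, i < n -> optcond n i (phi i) /\ posO (phi i)) -> wfN n c ->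
    Rprov n (NImp (ratv n phi) (NImp (boxv n c) (Ov n phi c)))
| r_unfold a : nufree a -> wfN n a -> posX true a ->
    Rprov n (NImp (NNu a) (nsubst (NNu a) a))
| r_ind c a : nufree a -> wfN n a -> posX true a ->
    Rprov n (NImp c (nsubst c a)) -> Rprov n (NImp c (NNu a))
| r_incl c a : nufree c -> wfN n c -> posX true c -> nufree a -> wfN n a ->
    Rprov n (NImp c a) -> Rprov n (NImp (NNu c) (NNu a))
| r_link (phi psi : nat -> oform) :
    (forall i, i < n -> optcond n i (phi i) /\ optcond n i (psi i) /\
                        FOprov n (OImp (phi i) (psi i))) ->
    Rprov n (NImp (Ov n phi NVar) (Ov n psi NVar)).

(* Common belief in rationality is an invariant of [O_gbr]: unfolding
   [Box^* rat] once yields [Box (Box^* rat /\ rat)], and rationality together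
   with belief in a formula yields its optimality, so [Box^* rat /\ rat] is a
   post-fixpoint of [X |-> O_gbr X] and lies below [nu X. O_gbr X].  Being a
   global best response implies not being locally strictly dominated, which
   Link and Incl transfer to the greatest fixpoints. *)
From Stdlib Require Import Arith Lia.

Ltac otaut_by_cases := intros v; simpl;
  repeat match goal with |- context [v ?x] => destruct (v x) end; reflexivity.
Ltac ntaut_by_cases := intros v; simpl;
  repeat match goal with |- context [neval v ?x] => destruct (neval v x) end; reflexivity.

Lemma bigAnd_ind (P : nform -> Prop) (f : nat -> nform) (m : nat) :
  (forall a b, P a -> P b -> P (NAnd a b)) ->
  (forall i, i < m -> P (f i)) -> 1 <= m -> P (bigAnd f m).
Proof.
  intros HAnd. induction m as [|m IH]; intros Hf Hm; [lia|].
  destruct m as [|m].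
  - apply Hf; lia.
  - apply HAnd; [apply IH; [intros; apply Hf|]|apply Hf]; lia.
Qed.

Lemma nsubst_bigAnd (c : nform) (f : nat -> nform) (m : nat) :
  nsubst c (bigAnd f m) = bigAnd (fun i => nsubst c (f i)) m.
Proof.
  induction m as [|m IH]; [reflexivity|].
  destruct m as [|m]; [reflexivity|].
  change (NAnd (nsubst c (bigAnd f (S m))) (nsubst c (f (S m))) =
          NAnd (bigAnd (fun i => nsubst c (f i)) (S m)) (nsubst c (f (S m)))).
  now rewrite IH.
Qed.

Lemma nsubst_boxv (c a : nform) (m : nat) :
  nsubst c (boxv m a) = boxv m (nsubst c a).
Proof. exact (nsubst_bigAnd c _ m). Qed.

Lemma nsubst_Ov (c a : nform) (m : nat) (phi : nat -> oform) :
  nsubst c (Ov m phi a) = Ov m phi (nsubst c a).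
Proof. exact (nsubst_bigAnd c _ m). Qed.

Lemma nsubst_occX_false (c a : nform) : occX a = false -> nsubst c a = a.
Proof.
  induction a; simpl; intros Ha; try discriminate; try reflexivity.
  - apply Bool.orb_false_iff in Ha as [Ha1 Ha2]. now rewrite IHa1, IHa2.
  - now rewrite IHa.
  - now rewrite IHa.
  - now rewrite IHa.
Qed.

Lemma posX_occX_false (b : bool) (a : nform) : occX a = false -> posX b a.
Proof.
  revert b. induction a; simpl; intros b Ha; try discriminate; auto.
  - apply Bool.orb_false_iff in Ha as [Ha1 Ha2]. auto.
  - split; [congruence | auto].
Qed.

Lemma optcond_gbr (n i : nat) : i < n -> optcond n i (gbr i).
Proof. intros Hi. unfold optcond; simpl; repeat split; auto. Qed.

Lemma optcond_lsd (n i : nat) : i < n -> optcond n i (lsd i).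
Proof. intros Hi. unfold optcond; simpl; repeat split; auto. Qed.

Lemma posO_gbr (i : nat) : posO (gbr i).
Proof. unfold posO; simpl; auto. Qed.

Section DerivedRules.
Variable n : nat.

Lemma FOprov_mp_taut (p q : oform) :
  wfO n (OImp p q) -> otaut (OImp p q) -> FOprov n p -> FOprov n q.
Proof. intros Hwf Ht Hp. exact (fo_mp n p q (fo_taut n _ Hwf Ht) Hp). Qed.

Lemma FOprov_mp2_taut (p1 p2 q : oform) :
  wfO n (OImp p1 (OImp p2 q)) -> otaut (OImp p1 (OImp p2 q)) ->
  FOprov n p1 -> FOprov n p2 -> FOprov n q.
Proof. intros Hwf Ht H1 H2. exact (fo_mp n _ _ (fo_mp n _ _ (fo_taut n _ Hwf Ht) H1) H2). Qed.

(* Under [lsd]'s binder for [y], the witness [z] of [gbr] is index 1: it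
   witnesses [lsd]'s existential, and [y] instantiates [gbr]'s universal. *)
Lemma gbr_imp_lsd (i : nat) : i < n -> FOprov n (OImp (gbr i) (lsd i)).
Proof.
  intros Hi.
  assert (witness_z : FOprov n
    (OImp (OAnd (OC (TV 1)) (OGe i TO (TV 0) (TV 1)))
          (OEx (OAnd (OC (TV 0)) (OGe i TO (TV 1) (TV 0)))))).
  { exact (fo_exI n (OAnd (OC (TV 0)) (OGe i TO (TV 1) (TV 0))) (TV 1) (conj I Hi)). }
  assert (instance_y : FOprov n
    (OImp (ONot (OGe i TO (TV 0) (TV 1)))
          (OEx (ONot (OGe i TO (TV 0) (TV 2)))))).
  { exact (fo_exI n (ONot (OGe i TO (TV 0) (TV 2))) (TV 0) Hi). }
  assert (counterexample_refutes : FOprov n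
    (OImp (ONot (OImp (OC (TV 0)) (OEx (OAnd (OC (TV 0)) (OGe i TO (TV 1) (TV 0))))))
          (ONot (OAnd (OC (TV 1)) (OAll (OGe i TO (TV 0) (TV 2))))))).
  { eapply FOprov_mp2_taut; [| | exact witness_z | exact instance_y];
      [simpl; tauto | otaut_by_cases]. }
  pose proof (fo_exE n _ (ONot (OAnd (OC (TV 0)) (OAll (OGe i TO (TV 0) (TV 1)))))
                counterexample_refutes) as no_counterexample.
  assert (body_imp_lsd : FOprov n
    (OImp (OAnd (OC (TV 0)) (OAll (OGe i TO (TV 0) (TV 1)))) (lsd i))).
  { eapply FOprov_mp_taut; [| | exact no_counterexample];
      [simpl; tauto | otaut_by_cases]. }
  exact (fo_exE n _ (lsd i) body_imp_lsd).
Qed.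

Lemma Rprov_mp2_taut (a b c : nform) :
  wfN n (NImp a (NImp b c)) -> ntaut (NImp a (NImp b c)) ->
  Rprov n a -> Rprov n b -> Rprov n c.
Proof. intros Hwf Ht Ha Hb. exact (r_mp n _ _ (r_mp n _ _ (r_taut n _ Hwf Ht) Ha) Hb). Qed.

Lemma Rprov_imp_trans (a b c : nform) : wfN n a -> wfN n b -> wfN n c ->
  Rprov n (NImp a b) -> Rprov n (NImp b c) -> Rprov n (NImp a c).
Proof.
  intros Ha Hb Hc Hab Hbc.
  apply (Rprov_mp2_taut (NImp a b) (NImp b c)); auto;
    [unfold NImp; simpl; tauto | ntaut_by_cases].
Qed.

Lemma Rprov_and_imp (s r b o : nform) :
  wfN n s -> wfN n r -> wfN n b -> wfN n o ->
  Rprov n (NImp s b) -> Rprov n (NImp r (NImp b o)) -> Rprov n (NImp (NAnd s r) o).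
Proof.
  intros Hs Hr Hb Ho Hsb Hrbo.
  apply (Rprov_mp2_taut (NImp s b) (NImp r (NImp b o))); auto;
    [unfold NImp; simpl; tauto | ntaut_by_cases].
Qed.

Lemma Rprov_and_comm_imp (a b c : nform) : wfN n a -> wfN n b -> wfN n c ->
  Rprov n (NImp (NAnd b a) c) -> Rprov n (NImp (NAnd a b) c).
Proof.
  intros. eapply r_mp; [|eassumption].
  apply r_taut; [unfold NImp; simpl; tauto | ntaut_by_cases].
Qed.

Hypothesis Hn : 1 <= n.

Lemma wfN_ratv (phi : nat -> oform) :
  (forall i, i < n -> optcond n i (phi i)) -> wfN n (ratv n phi).
Proof. intros Hphi. unfold ratv; apply bigAnd_ind; simpl; auto. Qed.

Lemma wfN_boxv (a : nform) : wfN n a -> wfN n (boxv n a).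
Proof. intros Ha. unfold boxv; apply bigAnd_ind; simpl; auto. Qed.

Lemma wfN_Ov (phi : nat -> oform) (a : nform) :
  (forall i, i < n -> optcond n i (phi i)) -> wfN n a -> wfN n (Ov n phi a).
Proof. intros Hphi Ha. unfold Ov; apply bigAnd_ind; simpl; auto. Qed.

Lemma nufree_ratv (phi : nat -> oform) : nufree (ratv n phi).
Proof. unfold ratv; apply bigAnd_ind; simpl; auto. Qed.

Lemma nufree_boxv (a : nform) : nufree a -> nufree (boxv n a).
Proof. intros Ha. unfold boxv; apply bigAnd_ind; simpl; auto. Qed.

Lemma nufree_Ov (phi : nat -> oform) (a : nform) : nufree a -> nufree (Ov n phi a).
Proof. intros Ha. unfold Ov; apply bigAnd_ind; simpl; auto. Qed.

Lemma occX_ratv (phi : nat -> oform) : occX (ratv n phi) = false.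
Proof.
  unfold ratv; apply bigAnd_ind; auto.
  intros a b Ha Hb. simpl. now rewrite Ha, Hb.
Qed.

Lemma wfN_boxstar (a : nform) : nufree a -> wfN n a -> wfN n (boxstar n a).
Proof. intros Hnf Hwf. split; [apply nufree_boxv | apply wfN_boxv]; simpl; auto. Qed.

Lemma wfN_nu_Ov_var (phi : nat -> oform) :
  (forall i, i < n -> optcond n i (phi i)) -> wfN n (NNu (Ov n phi NVar)).
Proof. intros Hphi. split; [apply nufree_Ov | apply wfN_Ov]; simpl; auto. Qed.

Lemma posX_boxv (b : bool) (a : nform) : posX b a -> posX b (boxv n a).
Proof. intros Ha. unfold boxv; apply bigAnd_ind; simpl; auto. Qed.

Lemma posX_Ov_var (phi : nat -> oform) :
  (forall i, i < n -> posO (phi i)) -> posX true (Ov n phi NVar).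
Proof. intros Hphi. unfold Ov; apply bigAnd_ind; simpl; auto. Qed.

Lemma boxstar_unfold (a : nform) : nufree a -> wfN n a -> occX a = false ->
  Rprov n (NImp (boxstar n a) (boxv n (NAnd (boxstar n a) a))).
Proof.
  intros Hnf Hwf Hocc.
  pose proof (r_unfold n (boxv n (NAnd NVar a))) as Hunfold.
  rewrite nsubst_boxv in Hunfold. simpl in Hunfold.
  rewrite (nsubst_occX_false _ a Hocc) in Hunfold.
  apply Hunfold.
  - apply nufree_boxv; simpl; auto.
  - apply wfN_boxv; simpl; auto.
  - apply posX_boxv; simpl; auto using posX_occX_false.
Qed.

Lemma rat_boxstar_imp_nu_Ov (phi : nat -> oform) :
  (forall i, i < n -> optcond n i (phi i) /\ posO (phi i)) ->
  Rprov n (NImp (NAnd (ratv n phi) (boxstar n (ratv n phi))) (NNu (Ov n phi NVar))).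
Proof.
  intros Hphi.
  assert (Hopt : forall i, i < n -> optcond n i (phi i)) by (intros i Hi; apply Hphi, Hi).
  pose proof (wfN_ratv phi Hopt) as wR. pose proof (nufree_ratv phi) as nR.
  pose proof (occX_ratv phi) as oR.
  set (R := ratv n phi) in *. set (S := boxstar n R). set (c := NAnd S R).
  assert (wS : wfN n S) by (apply wfN_boxstar; auto).
  assert (wc : wfN n c) by (split; auto).
  assert (wBc : wfN n (boxv n c)) by (apply wfN_boxv; auto).
  assert (wOc : wfN n (Ov n phi c)) by (apply wfN_Ov; auto).
  pose proof (wfN_nu_Ov_var phi Hopt) as wNu.
  assert (unfold_S : Rprov n (NImp S (boxv n c))).
  { apply boxstar_unfold; auto. }
  assert (rat_belief : Rprov n (NImp R (NImp (boxv n c) (Ov n phi c)))).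
  { apply r_ratbox; auto. }
  assert (c_postfixpoint : Rprov n (NImp c (nsubst c (Ov n phi NVar)))).
  { rewrite nsubst_Ov. exact (Rprov_and_imp _ _ _ _ wS wR wBc wOc unfold_S rat_belief). }
  apply Rprov_and_comm_imp; auto.
  apply r_ind; auto.
  - apply nufree_Ov; simpl; auto.
  - apply wfN_Ov; simpl; auto.
  - apply posX_Ov_var. apply Hphi.
Qed.

Lemma nu_Ov_mono (phi psi : nat -> oform) :
  (forall i, i < n -> optcond n i (phi i) /\ posO (phi i) /\
                      optcond n i (psi i) /\ FOprov n (OImp (phi i) (psi i))) ->
  Rprov n (NImp (NNu (Ov n phi NVar)) (NNu (Ov n psi NVar))).
Proof.
  intros Hphipsi.
  apply r_incl.
  - apply nufree_Ov; simpl; auto.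
  - apply wfN_Ov; simpl; auto. apply Hphipsi.
  - apply posX_Ov_var. apply Hphipsi.
  - apply nufree_Ov; simpl; auto.
  - apply wfN_Ov; simpl; auto. apply Hphipsi.
  - apply r_link. intros i Hi. specialize (Hphipsi i Hi). tauto.
Qed.

End DerivedRules.

Theorem theorem2 (n : nat) (G : StrategicGame n) (Hn : 1 <= n) :
  Rprov n (NImp (NAnd (ratv n gbr) (boxstar n (ratv n gbr)))
                (NNu (Ov n lsd NVar))).
Proof.
  assert (Hgbr : forall i, i < n -> optcond n i (gbr i) /\ posO (gbr i))
    by auto using optcond_gbr, posO_gbr.
  apply (Rprov_imp_trans n _ (NNu (Ov n gbr NVar))).
  - split; [apply wfN_ratv | apply wfN_boxstar]; auto using wfN_ratv, nufree_ratv, optcond_gbr.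
  - apply wfN_nu_Ov_var; auto using optcond_gbr.
  - apply wfN_nu_Ov_var; auto using optcond_lsd.
  - exact (rat_boxstar_imp_nu_Ov n Hn gbr Hgbr).
  - apply nu_Ov_mono; auto.
    intros i Hi. auto 6 using optcond_gbr, optcond_lsd, posO_gbr, gbr_imp_lsd.
Qed.
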